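(* Let $A$ be a Nakayama algebra with $n$ simple modules. The following are equivalent: (1) $A$ has finite global dimension and magnitude one; (2) $A$ has a unique (up to isomorphism) indecomposable projective module of dimension $n$; (3) $A$ has finite global dimension and Loewy length at least $n$.
   Context: Nakayama algebras are connected finite-dimensional algebras over an algebraically closed field $K$ all of whose indecomposable modules are uniserial, given as bound quiver algebras on a linear quiver $0\to\cdots\to n-1$ or cyclic quiver $0\to\cdots\to n-1\to 0$ with admissible relations. The Kupisch series is $[c_0,\dots,c_{n-1}]$ with $c_i=\dim_K e_iA$ the dimension of the $i$-th indecomposable projective module; the Loewy length is $\max_i c_i$. The Cartan matrix $\mathbf C_A$ has entries $\dim_K e_iAe_j$; for $A$ of finite global dimension it is invertible, and the magnitude of $A$ is the sum of all entries of $\mathbf C_A^{-1}$. *)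

(* Nakayama algebras encoded by their Kupisch series. *)
From HB Require Import structures.
From mathcomp Require Import all_boot all_order all_algebra.
Set Implicit Arguments. Unset Strict Implicit. Unset Printing Implicit Defensive.
Import Order.TTheory GRing.Theory Num.Theory.

(* Vertices are 0..n-1; arrows i -> i+1 (and n-1 -> 0 in the cyclic case).
   The Kupisch series is c : nat -> nat, only its values c 0 .. c (n-1)
   are meaningful: c i = dim_K e_i A. A path of length t starting at i
   ends at vertex (i + t) %% n (in the linear case i + t < n anyway). *)
Definition vtx (n i t : nat) : nat := (i + t) %% n.

Definition linear_kupisch (n : nat) (c : nat -> nat) : Prop :=
  [/\ 0 < n, c n.-1 = 1 &
      forall i, i < n.-1 -> 2 <= c i /\ c i <= (c i.+1).+1].

Definition cyclic_kupisch (n : nat) (c : nat -> nat) : Prop :=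
  0 < n /\ forall i, i < n -> 2 <= c i /\ c i <= (c (vtx n i 1)).+1.

Definition nakayama_kupisch (n : nat) (c : nat -> nat) : Prop :=
  linear_kupisch n c \/ cyclic_kupisch n c.

(* Indecomposable modules are uniserial: M(i,k) = e_i A / e_i J^k,
   1 <= k <= c i (top S_i, length k). Its projective cover is e_i A = M(i, c i);
   it is projective iff k = c i, and otherwise its first syzygy is
   e_i J^k = M(vtx n i k, c i - k).  [pd_fin f n c i k] says that the syzygy
   sequence of M(i,k) reaches a projective module within f steps, i.e.
   pd M(i,k) <= f. *)
Fixpoint pd_fin (f n : nat) (c : nat -> nat) (i k : nat) : bool :=
  if k == c i then true
  else match f with
       | 0 => false
       | f'.+1 => pd_fin f' n c (vtx n i k) (c i - k)
       end.

Definition finite_gldim (n : nat) (c : nat -> nat) : Prop :=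
  forall i, i < n -> exists f, pd_fin f n c i 1.

(* Cartan matrix: (C_A)_{ij} = dim_K e_i A e_j = number of paths of length
   t < c i starting at i and ending at j. *)
Definition cartan (n : nat) (c : nat -> nat) : 'M[rat]_n :=
  \matrix_(i < n, j < n) ((#|[set t : 'I_(c i) | vtx n i t == j]|)%:R)%R.

Definition magnitude (n : nat) (c : nat -> nat) : rat :=
  (\sum_(i < n) \sum_(j < n) (invmx (cartan n c)) i j)%R.

Definition loewy_length (n : nat) (c : nat -> nat) : nat :=
  \max_(i < n) c i.

Definition num_proj_dim (n : nat) (c : nat -> nat) (d : nat) : nat :=
  #|[set i : 'I_n | c i == d]|.

From HB Require Import structures.
From mathcomp Require Import all_boot all_order all_algebra.
From mathcomp Require Import zify.
Import Order.TTheory GRing.Theory Num.Theory.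
Set Implicit Arguments. Unset Strict Implicit. Unset Printing Implicit Defensive.

(* Finite global dimension makes the Cartan matrix C invertible: resolving each simple module
   by projectives writes the rows of C^-1 as alternating sums of unit vectors, so every row sum
   s_j of C^-1 is 0 or 1, and the magnitude is sum_j s_j.  Summing the entries of C C^-1 = 1
   gives n = sum_j s_j dim(A e_j), and dim(A e_j) lies between the least and the largest c_i.
   Hence finite global dimension forces some c_i <= n, magnitude one forces some c_i >= n, and
   since the Kupisch series drops by at most one along each arrow, some c_i equals n.  A
   projective of dimension n has an all-ones Cartan row, so it is unique when C is invertible,
   and it yields magnitude one.  Conversely, a unique projective of dimension n gives finite
   global dimension: trivially for the linear quiver, and for the cyclic one because two syzygy
   steps move the endpoints of a module, viewed as an interval of the universal cover, by a
   monotone map of [0, n] whose only fixed points are 0 and n. *)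

Lemma vtx_lt n i t : 0 < n -> vtx n i t < n.
Proof. exact: ltn_pmod. Qed.

Lemma vtx0 n i : i < n -> vtx n i 0 = i.
Proof. by move=> i_lt; rewrite /vtx addn0 modn_small. Qed.

Lemma vtxnn n i : i < n -> vtx n i n = i.
Proof. by move=> i_lt; rewrite /vtx modnDr modn_small. Qed.

Lemma vtxD n i t u : vtx n i (t + u) = vtx n (vtx n i t) u.
Proof. by rewrite /vtx modnDml addnA. Qed.

Lemma vtxDn n i t : vtx n i (t + n) = vtx n i t.
Proof. by rewrite /vtx addnA modnDr. Qed.

Lemma vtx_sub n i j : i < n -> j < n -> vtx n i ((j + (n - i)) %% n) = j.
Proof.
move=> i_lt j_lt; rewrite /vtx modnDmr addnCA subnKC 1?ltnW //.
by rewrite modnDr modn_small.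
Qed.

Lemma sum_addn_modn_eq1 n t j : j < n -> \sum_(r < n) ((r + t) %% n == j) = 1.
Proof.
move=> j_lt; have n_gt0 : 0 < n by apply: leq_ltn_trans j_lt.
set r0 := (j + (n - t %% n)) %% n.
have r0_lt : r0 < n by apply: ltn_pmod.
have r0tE : (r0 + t) %% n = j.
  rewrite /r0 modnDml.
  have -> : j + (n - t %% n) + t = (t %/ n).+1 * n + j.
    rewrite {2}(divn_eq t n) mulSn; have := ltn_pmod t n_gt0.
    by move: (t %% n) (t %/ n * n) => r q; lia.
  by rewrite modnMDl modn_small.
rewrite (bigD1 (Ordinal r0_lt)) //= r0tE eqxx big1 // => r.
by rewrite -val_eqE -{1}r0tE eqn_modDr !modn_small // => /negbTE ->.
Qed.

(* The multiplicity of the simple module S_j in M(i,k). *)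
Definition comp_mult n i k j := \sum_(t < k) (vtx n i t == j).

Lemma comp_multD n i k m j :
  comp_mult n i (k + m) j = comp_mult n i k j + comp_mult n (vtx n i k) m j.
Proof.
rewrite /comp_mult big_split_ord /=; congr (_ + _).
by apply: eq_bigr => t _; rewrite vtxD.
Qed.

Lemma comp_mult_le n i k m j : k <= m -> comp_mult n i k j <= comp_mult n i m j.
Proof. by move=> le_km; rewrite -(subnKC le_km) comp_multD leq_addr. Qed.

Lemma sum_comp_mult n m j : j < n -> \sum_(r < n) comp_mult n r m j = m.
Proof.
move=> j_lt; rewrite exchange_big /= (eq_bigr (fun=> 1)).
  by rewrite sum_nat_const card_ord muln1.
by move=> t _; exact: sum_addn_modn_eq1.
Qed.

Lemma comp_mult_full n i j : j < n -> comp_mult n i n j = 1.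
Proof.
move=> j_lt; rewrite /comp_mult -(sum_addn_modn_eq1 i j_lt).
by apply: eq_bigr => t _; rewrite /vtx addnC.
Qed.

Definition dimv n i k : 'rV[rat]_n := (\row_j (comp_mult n i k j)%:R)%R.

Lemma dimvD n i k m : dimv n i (k + m) = (dimv n i k + dimv n (vtx n i k) m)%R.
Proof. by apply/rowP => j; rewrite !mxE comp_multD natrD. Qed.

Lemma dimv1 n (i : 'I_n) : dimv n i 1 = delta_mx 0%R i.
Proof.
apply/rowP => j; rewrite !mxE /comp_mult big_ord1 vtx0 //.
by rewrite eqxx eq_sym.
Qed.

Lemma cartanE n (c : nat -> nat) (i j : 'I_n) : cartan n c i j = (comp_mult n i (c i) j)%:R%R.
Proof.
rewrite mxE -sum1_card big_mkcond /=; congr (_%:R)%R; apply: eq_bigr => t _.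
by rewrite inE; case: eqP.
Qed.

Lemma row_cartan n (c : nat -> nat) (i : 'I_n) : row i (cartan n c) = dimv n i (c i).
Proof. by apply/rowP => j; rewrite [LHS]mxE cartanE mxE. Qed.

Lemma cartan_dim_n n (c : nat -> nat) (i j : 'I_n) : c i = n -> cartan n c i j = 1%R.
Proof. by move=> ci; rewrite cartanE ci comp_mult_full. Qed.

Lemma sum_mulmx (R : pzSemiRingType) m n p (A : 'M[R]_(m, n)) (B : 'M_(n, p)) :
  (\sum_i \sum_k (A *m B) i k = \sum_j (\sum_i A i j) * (\sum_k B j k))%R.
Proof.
under eq_bigr do under eq_bigr do rewrite mxE.
under eq_bigr do rewrite exchange_big /=.
rewrite exchange_big /=; apply: eq_bigr => j _.
by rewrite mulr_suml; apply: eq_bigr => i _; rewrite mulr_sumr.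
Qed.

Lemma sum_delta_row (R : pzSemiRingType) n (i : 'I_n) :
  (\sum_j (delta_mx 0 i : 'rV[R]_n) 0 j = 1)%R.
Proof.
rewrite (bigD1 i) //= mxE !eqxx big1 ?addr0 // => j.
by rewrite mxE => /negbTE ->.
Qed.

Lemma sum_row_mx1 (R : pzSemiRingType) n (i : 'I_n) : (\sum_j (1%:M : 'M[R]_n) i j = 1)%R.
Proof. by rewrite -[RHS](sum_delta_row R i); apply: eq_bigr => j _; rewrite -row1 [RHS]mxE. Qed.

Lemma pd_finS f n c i k :
  pd_fin f.+1 n c i k = (k == c i) || pd_fin f n c (vtx n i k) (c i - k).
Proof. by rewrite /=; case: ifP. Qed.

Section Resolution.

Variables (n : nat) (c : nat -> nat).
Hypothesis c_gt0 : forall i, i < n -> 0 < c i.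
Hypothesis c_shift : forall i k, i < n -> k < c i -> c i <= c (vtx n i k) + k.

Lemma syzygy_bounds i k : i < n -> k < c i -> 0 < c i - k <= c (vtx n i k).
Proof. by move=> i_lt k_lt; have := c_shift i_lt k_lt; lia. Qed.

Lemma pd_fin_resolution f i k : i < n -> 0 < k <= c i -> pd_fin f n c i k ->
  exists (x : 'rV[rat]_n) (b : bool),
    (x *m cartan n c = dimv n i k /\ \sum_j x 0 j = b%:R)%R.
Proof.
have proj j (j_lt : j < n) : exists (x : 'rV[rat]_n) (b : bool),
    (x *m cartan n c = dimv n j (c j) /\ \sum_l x 0 l = b%:R)%R.
  by exists (delta_mx 0 (Ordinal j_lt))%R, true; rewrite -rowE row_cartan sum_delta_row.
elim: f i k => [|f IH] i k i_lt /andP[k_gt0 k_le].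
all: have [-> _|k_ne] := eqVneq k (c i); first exact: proj.
  by rewrite /= ifN.
rewrite pd_finS (negbTE k_ne) /= => pd.
have k_lt : k < c i by rewrite ltn_neqAle k_ne.
have n_gt0 : 0 < n by apply: leq_ltn_trans i_lt.
have [x [b [xC xs]]] := IH _ _ (vtx_lt i k n_gt0) (syzygy_bounds i_lt k_lt) pd.
exists ((delta_mx 0 (Ordinal i_lt) : 'rV_n) - x)%R, (~~ b); split.
  by rewrite mulmxBl -rowE row_cartan xC -{1}(subnKC k_le) dimvD addrK.
under eq_bigr do rewrite mxE; rewrite big_split /= sum_delta_row.
by under eq_bigr do rewrite mxE; rewrite sumrN xs; case: (b).
Qed.

Lemma finite_gldim_cartan : finite_gldim n c ->
  cartan n c \in unitmx /\
  exists s : 'I_n -> bool, forall i, (\sum_j invmx (cartan n c) i j = (s i)%:R)%R.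
Proof.
move=> gl.
have /fin_all_exists[x xP] : forall i : 'I_n, exists y : 'rV[rat]_n,
    (y *m cartan n c = delta_mx 0 i)%R /\ exists b : bool, (\sum_j y 0 j = b%:R)%R.
  move=> i; have [f pd] := gl i (ltn_ord i).
  have [|y [b [yC ys]]] := pd_fin_resolution (ltn_ord i) _ pd; first by rewrite c_gt0.
  by exists y; rewrite yC dimv1; split; last exists b.
have [s xs] := fin_all_exists (fun i => (xP i).2).
set X := (\matrix_i x i)%R.
have XC : (X *m cartan n c = 1%:M)%R.
  by apply/row_matrixP => i; rewrite row_mul rowK row1 (xP i).1.
have [_ C_unit] := mulmx1_unit XC.
have -> : invmx (cartan n c) = X.
  by rewrite -[X]mulmx1 -(mulmxV C_unit) mulmxA XC mul1mx.
split=> //; exists s => i; rewrite -xs; apply: eq_bigr => j _; by rewrite mxE.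
Qed.

End Resolution.

(* dim_K A e_j, the j-th column sum of the Cartan matrix. *)
Definition dimAe n (c : nat -> nat) j := \sum_(r < n) comp_mult n r (c r) j.

Lemma dimAe_le n c B j :
  j < n -> (forall r, r < n -> c r <= B) -> dimAe n c j <= B.
Proof.
move=> j_lt c_le; rewrite -(sum_comp_mult B j_lt) leq_sum // => r _.
exact/comp_mult_le/c_le.
Qed.

Lemma dimAe_ge n c B j :
  j < n -> (forall r, r < n -> B <= c r) -> B <= dimAe n c j.
Proof.
move=> j_lt c_ge; rewrite -{1}(sum_comp_mult B j_lt) leq_sum // => r _.
exact/comp_mult_le/c_ge.
Qed.

Section InvertibleCartan.

Variables (n : nat) (c : nat -> nat).
Hypothesis cartan_unit : cartan n c \in unitmx.

Lemma dim_n_proj_uniq (a b : 'I_n) : c a = n -> c b = n -> a = b.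
Proof.
move=> ca cb.
have : (delta_mx 0 a = delta_mx 0 b :> 'rV[rat]_n)%R.
  apply: (can_inj (mulmxK cartan_unit)); rewrite -!rowE.
  by apply/rowP => j; rewrite [LHS]mxE [RHS]mxE !cartan_dim_n.
move/rowP/(_ a); rewrite !mxE !eqxx /=.
by case: eqP => // _ /eqP; rewrite oner_eq0.
Qed.

Lemma magnitude_dim_n (i : 'I_n) : c i = n -> magnitude n c = 1%R.
Proof.
move=> ci; rewrite /magnitude exchange_big /=.
rewrite -(sum_row_mx1 rat i) -(mulmxV cartan_unit); apply: eq_bigr => j _.
by rewrite mxE; apply: eq_bigr => r _; rewrite cartan_dim_n // mul1r.
Qed.

Variable s : 'I_n -> bool.
Hypothesis rowsum_invmx : forall i, (\sum_j invmx (cartan n c) i j = (s i)%:R)%R.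

Lemma sum_rowsum_dimAe : \sum_(i < n) s i * dimAe n c i = n.
Proof.
apply/eqP; rewrite -(eqr_nat rat) natr_sum; apply/eqP.
have -> : (n%:R = \sum_r \sum_j (cartan n c *m invmx (cartan n c)) r j :> rat)%R.
  rewrite mulmxV // (eq_bigr (fun=> 1%R)) ?sumr_const ?card_ord // => r _.
  exact: sum_row_mx1.
rewrite sum_mulmx; apply: eq_bigr => i _.
rewrite natrM mulrC rowsum_invmx /dimAe natr_sum; congr (_ * _)%R.
by apply: eq_bigr => r _; rewrite cartanE.
Qed.

Lemma exists_dim_le : 0 < n -> exists2 b, b < n & c b <= n.
Proof.
move=> n_gt0; have [/existsP[b cb]|/existsPn c_gt] := boolP [exists b : 'I_n, c b <= n].
  by exists b.
have : \sum_(i < n) s i * dimAe n c i != 0 by rewrite sum_rowsum_dimAe -lt0n.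
rewrite sum_nat_eq0 => /forallPn[i /= si].
have : s i * dimAe n c i <= \sum_(j < n) s j * dimAe n c j.
  by rewrite (bigD1 i) //= leq_addr.
rewrite sum_rowsum_dimAe.
rewrite leqNgt; case: (s i) si => //= _; rewrite mul1n dimAe_ge // => r r_lt.
by have := c_gt (Ordinal r_lt); rewrite ltnNge.
Qed.

Lemma exists_dim_ge : magnitude n c = 1%R -> exists2 a, a < n & n <= c a.
Proof.
move=> mag1.
have sum_s : \sum_(i < n) s i = 1.
  have : ((\sum_(i < n) s i)%:R = magnitude n c :> rat)%R.
    by rewrite natr_sum; apply: eq_bigr => i _; rewrite rowsum_invmx.
  by rewrite mag1 => /eqP; rewrite pnatr_eq1 => /eqP.
have [/existsP[a ca]|/existsPn c_lt] := boolP [exists a : 'I_n, n <= c a].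
  by exists a.
have [n0|n_gt0] := posnP n.
  by move: sum_s; rewrite big1 // => i; have := ltn_ord i; lia.
have : \sum_(i < n) s i * dimAe n c i <= (\sum_(i < n) s i) * n.-1.
  rewrite big_distrl leq_sum // => i _; rewrite leq_mul2l dimAe_le ?orbT // => r r_lt.
  by rewrite -ltnS prednK // ltnNge (c_lt (Ordinal r_lt)).
by rewrite sum_rowsum_dimAe sum_s mul1n; lia.
Qed.

End InvertibleCartan.

Lemma linear_kupisch_bound n c i : linear_kupisch n c -> i < n -> c i + i <= n.
Proof.
case=> n_gt0 c_last c_step i_lt.
have [d d_eq] : exists d, n - i = d.+1 by exists (n - i).-1; lia.
elim: d i d_eq i_lt => [|d IH] i d_eq i_lt.
  have -> : i = n.-1 by lia.
  by rewrite c_last; lia.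
have i_lt' : i < n.-1 by lia.
have /IH : n - i.+1 = d.+1 by lia.
by have := (c_step i i_lt').2; lia.
Qed.

Lemma linear_kupisch_shift n c i k :
  linear_kupisch n c -> i + k < n -> c i <= c (i + k) + k.
Proof.
case=> _ _ c_step; elim: k => [|k IH] lt_ik; first by rewrite !addn0.
have ik_lt : i + k < n.-1 by lia.
have /IH : i + k < n by lia.
by have := (c_step _ ik_lt).2; rewrite !addnS; lia.
Qed.

Lemma cyclic_kupisch_shift n c i k :
  cyclic_kupisch n c -> i < n -> c i <= c (vtx n i k) + k.
Proof.
case=> n_gt0 c_step i_lt; elim: k => [|k IH]; first by rewrite vtx0 ?addn0.
have := (c_step _ (vtx_lt i k n_gt0)).2; rewrite -vtxD addn1; lia.
Qed.

Lemma kupisch_c_gt0 n c : nakayama_kupisch n c -> forall i, i < n -> 0 < c i.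
Proof.
case=> [[n_gt0 c_last c_step]|[_ c_step]] i i_lt; last by have := (c_step i i_lt).1; lia.
have [->|i_ne] := eqVneq i n.-1; first by rewrite c_last.
have i_lt' : i < n.-1 by lia.
by have := (c_step i i_lt').1; lia.
Qed.

Lemma kupisch_shift n c : nakayama_kupisch n c ->
  forall i k, i < n -> k < c i -> c i <= c (vtx n i k) + k.
Proof.
case=> [Hl|Hc] i k i_lt k_lt; last exact: cyclic_kupisch_shift.
have bound := linear_kupisch_bound Hl i_lt.
have ik_lt : i + k < n by lia.
by rewrite /vtx modn_small // (linear_kupisch_shift Hl).
Qed.

Lemma linear_finite_gldim n c : linear_kupisch n c -> finite_gldim n c.
Proof.
move=> Hl; suff pd : forall f i k, i < n -> 0 < k <= c i -> n <= f + i -> pd_fin f n c i k.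
  move=> i i_lt; exists n; apply: pd => //; last exact: leq_addr.
  exact: kupisch_c_gt0 (or_introl Hl) _ i_lt.
elim=> [|f IH] i k i_lt /andP[k_gt0 k_le] f_ge; first by lia.
rewrite pd_finS; have [//|k_ne] := eqVneq k (c i); rewrite /=.
have bound := linear_kupisch_bound Hl i_lt.
have ik_lt : i + k < n by lia.
have shift := linear_kupisch_shift Hl ik_lt.
by rewrite /vtx modn_small // IH //; lia.
Qed.

Lemma discrete_ivt (s : nat -> nat) m L :
  m <= s 0 -> s L <= m -> (forall k, k < L -> s k <= (s k.+1).+1) ->
  exists2 k, k <= L & s k = m.
Proof.
elim: L s => [|L IH] s s0_ge sL_le s_step; first by exists 0 => //; lia.
have [s0_eq|s0_ne] := eqVneq (s 0) m; first by exists 0.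
have [|k k_le sk_eq] := IH (fun k => s k.+1) _ sL_le (fun k k_lt => s_step k.+1 k_lt).
  by have := s_step 0 isT; lia.
by exists k.+1.
Qed.

Lemma kupisch_dim_n n c : nakayama_kupisch n c ->
  (exists2 a, a < n & n <= c a) -> (exists2 b, b < n & c b <= n) ->
  exists2 i, i < n & c i = n.
Proof.
case=> [Hl|Hc] [a a_lt ca] [b b_lt cb].
  by exists a => //; have := linear_kupisch_bound Hl a_lt; lia.
have n_gt0 : 0 < n by case: Hc.
have ca' : n <= c (vtx n a 0) by rewrite vtx0.
have cb' : c (vtx n a ((b + (n - a)) %% n)) <= n by rewrite vtx_sub.
have step k : k < (b + (n - a)) %% n -> c (vtx n a k) <= (c (vtx n a k.+1)).+1.
  by move=> _; rewrite -[k.+1]addn1 vtxD; exact: (Hc.2 _ (vtx_lt a k n_gt0)).2.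
have [k _ ck] := discrete_ivt ca' cb' step.
by exists (vtx n a k); rewrite ?vtx_lt.
Qed.

Section MonotoneIteration.

Variables (m : nat) (h : nat -> nat).
Hypothesis h_mono : forall z w, z <= w <= m -> h z <= h w.
Hypothesis h0 : h 0 = 0.
Hypothesis hm : h m = m.
Hypothesis h_neq : forall z, 0 < z < m -> h z != z.

Lemma iter_end_stable j k z : iter k h z \in [:: 0; m] -> iter (j + k) h z \in [:: 0; m].
Proof. by rewrite iterD !inE => /orP[]/eqP ->; rewrite iter_fix ?eqxx ?orbT. Qed.

Lemma iter_reaches_end z : z <= m -> exists k, iter k h z \in [:: 0; m].
Proof.
have h_le y : y <= m -> h y <= m by move=> y_le; rewrite -hm h_mono // y_le /=.
have fixed_end y : y <= m -> h y = y -> exists k, iter k h y \in [:: 0; m].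
  move=> y_le hy; exists 0; rewrite !inE; apply/negPn/negP; rewrite negb_or => /andP[y0 ym].
  by move/eqP: hy; apply/negP/h_neq; rewrite lt0n y0 ltn_neqAle ym y_le.
have down y : y <= m -> h y <= y -> exists k, iter k h y \in [:: 0; m].
  have [d] := ubnP y; elim: d y => // d IH y y_lt y_le hy.
  have [/(fixed_end y y_le) //|hy_ne] := eqVneq (h y) y.
  have hy_lt : h y < y by rewrite ltn_neqAle hy_ne.
  have [|k end_k] := IH (h y) (leq_trans hy_lt y_lt) (h_le y y_le).
    by rewrite h_mono // (ltnW hy_lt).
  by exists k.+1; rewrite iterSr.
have up y : y <= m -> y <= h y -> exists k, iter k h y \in [:: 0; m].
  have [d] := ubnP (m - y); elim: d y => // d IH y y_lt y_le hy.
  have [/(fixed_end y y_le) //|hy_ne] := eqVneq (h y) y.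
  have hy_gt : y < h y by rewrite ltn_neqAle eq_sym hy_ne.
  have hy_le := h_le y y_le.
  have [||k end_k] := IH (h y) _ hy_le.
  - by lia.
  - by rewrite h_mono // (ltnW hy_gt).
  by exists k.+1; rewrite iterSr.
by move=> z_le; have [/(down z z_le)|/ltnW/(up z z_le)] := leqP (h z) z.
Qed.

Lemma iter_reaches_end2 z w : z <= m -> w <= m ->
  exists k, iter k h z \in [:: 0; m] /\ iter k h w \in [:: 0; m].
Proof.
move=> /iter_reaches_end[kz end_z] /iter_reaches_end[kw end_w].
exists (maxn kz kw); split.
  by rewrite -(subnK (leq_maxl kz kw)) iter_end_stable.
by rewrite -(subnK (leq_maxr kz kw)) iter_end_stable.
Qed.

End MonotoneIteration.

Section CyclicTermination.

Variables (n : nat) (c : nat -> nat) (i0 : nat).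
Hypothesis c_cyclic : cyclic_kupisch n c.
Hypothesis i0_lt : i0 < n.
Hypothesis c_i0 : c i0 = n.
Hypothesis c_uniq : forall i, i < n -> c i = n -> i = i0.

(* Position z of the universal cover of the cyclic quiver lies over vertex [vtx n i0 z], so
   [M(vtx n i0 U, V - U)] is the interval [U, V).  Its projective cover is [U, reach U), and
   two syzygies take [U, V) to [reach U, reach V), that is, to [omega2 U, omega2 V) shifted
   by one period. *)
Let reach z := z + c (vtx n i0 z).
Let omega2 z := reach z - n.

Lemma reach_mono z w : z <= w -> reach z <= reach w.
Proof.
move=> le_zw; have n_gt0 : 0 < n by case: c_cyclic.
have := cyclic_kupisch_shift (w - z) c_cyclic (vtx_lt i0 z n_gt0).
by rewrite -vtxD subnKC // /reach; lia.
Qed.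

Lemma reach_bounds z : z <= n -> n <= reach z <= n + n.
Proof.
move=> z_le; have := reach_mono (leq0n z); have := reach_mono z_le.
by rewrite /reach vtx0 // vtxnn // c_i0 add0n => -> ->.
Qed.

Lemma omega2_neq z : 0 < z < n -> omega2 z != z.
Proof.
move=> /andP[z_gt0 z_lt]; apply/eqP => hz.
have n_gt0 : 0 < n by case: c_cyclic.
have cz : c (vtx n i0 z) = n.
  by move: hz (reach_bounds (ltnW z_lt)); rewrite /omega2 /reach; lia.
have := c_uniq (vtx_lt i0 z n_gt0) cz; rewrite /vtx => /eqP.
rewrite -{2}(modn_small i0_lt) -{2}[i0]addn0 eqn_modDl mod0n modn_small //.
by rewrite (negbTE (lt0n_neq0 z_gt0)).
Qed.

Lemma pd_fin_interval_SS f U V : U <= V <= n ->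
  pd_fin f.+2 n c (vtx n i0 U) (V - U) =
  [|| V == reach U, reach U == reach V
      | pd_fin f n c (vtx n i0 (omega2 U)) (omega2 V - omega2 U)].
Proof.
move=> /andP[le_UV le_Vn].
have := reach_bounds (leq_trans le_UV le_Vn); have := reach_bounds le_Vn.
have := reach_mono le_UV; rewrite /omega2 /reach => le_reach /andP[_ RV] /andP[RU _].
rewrite !pd_finS -!vtxD subnKC //.
have -> : V + (c (vtx n i0 U) - (V - U)) = U + c (vtx n i0 U) - n + n by lia.
rewrite vtxDn; congr [|| _, _ | pd_fin _ _ _ _ _].
- by apply/eqP/eqP; lia.
- by apply/eqP/eqP; lia.
- by lia.
Qed.

Lemma pd_fin_interval k U V : U < V <= n ->
  iter k omega2 U \in [:: 0; n] -> iter k omega2 V \in [:: 0; n] ->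
  pd_fin k.*2.+1 n c (vtx n i0 U) (V - U).
Proof.
elim: k U V => [|k IH] U V /andP[lt_UV le_Vn] end_U end_V.
  have [-> ->] : U = 0 /\ V = n.
    by move: end_U end_V; rewrite /= !inE => /orP[]/eqP U_eq /orP[]/eqP V_eq; lia.
  by rewrite subn0 vtx0 //= c_i0 eqxx.
rewrite doubleS pd_fin_interval_SS ?(ltnW lt_UV) //; apply/orP; right.
case: eqP => //= reach_ne.
have RUV := reach_mono (ltnW lt_UV); have /andP[_ RV_le] := reach_bounds le_Vn.
have /andP[RU_ge _] := reach_bounds (ltnW (leq_trans lt_UV le_Vn)).
by apply: IH; rewrite -?iterSr // /omega2; apply/andP; split; lia.
Qed.

Lemma cyclic_finite_gldim : finite_gldim n c.
Proof.
move=> i i_lt; pose U := (i + (n - i0)) %% n.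
have U_lt : U < n by rewrite ltn_pmod //; case: c_cyclic.
have omega2_mono z w : z <= w <= n -> omega2 z <= omega2 w.
  by case/andP=> le_zw _; rewrite leq_sub2r // reach_mono.
have omega2_0 : omega2 0 = 0 by rewrite /omega2 /reach vtx0 // c_i0 subnn.
have omega2_n : omega2 n = n by rewrite /omega2 /reach vtxnn // c_i0 addnK.
have [k [end_U end_V]] :=
  iter_reaches_end2 omega2_mono omega2_0 omega2_n omega2_neq (ltnW U_lt) U_lt.
exists k.*2.+1; have := pd_fin_interval (V := U.+1) _ end_U end_V.
by rewrite /U vtx_sub // subSnn; apply; rewrite ltnSn.
Qed.

End CyclicTermination.

Lemma num_proj_dim1P n c d : num_proj_dim n c d = 1 <->
  exists i0, [/\ i0 < n, c i0 = d & forall i, i < n -> c i = d -> i = i0].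
Proof.
split=> [/eqP/cards1P[i0 def_i0]|[i0 [i0_lt ci0 uniq]]].
  exists i0; split=> // [|i i_lt ci].
    by move: (set11 i0); rewrite -def_i0 inE => /eqP.
  have : Ordinal i_lt \in [set i : 'I_n | c i == d] by rewrite inE ci.
  by rewrite def_i0 in_set1 => /eqP/(congr1 val).
apply/eqP/cards1P; exists (Ordinal i0_lt); apply/setP => i; rewrite !inE.
by apply/eqP/eqP => [/(uniq _ (ltn_ord i)) i_eq|->]; first exact: val_inj.
Qed.

Lemma loewy_length_geP n c m : 0 < n ->
  m <= loewy_length n c <-> exists2 a, a < n & m <= c a.
Proof.
move=> n_gt0; split=> [|[a a_lt ma]]; last exact: leq_trans ma (leq_bigmax (Ordinal a_lt)).
rewrite /loewy_length.
by have [|i ->] := @bigop.eq_bigmax _ (fun i : 'I_n => c i); [rewrite card_ord | exists i].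
Qed.

Theorem proposition4p4 (n : nat) (c : nat -> nat) :
  nakayama_kupisch n c ->
  ((finite_gldim n c /\ magnitude n c = 1%R) <-> num_proj_dim n c n = 1) /\
  (num_proj_dim n c n = 1 <-> (finite_gldim n c /\ n <= loewy_length n c)).
Proof.
move=> Hk; have n_gt0 : 0 < n by case: Hk => [[]|[]].
have cartan_inv := finite_gldim_cartan (kupisch_c_gt0 Hk) (kupisch_shift Hk).
have uniq_of_gl : finite_gldim n c -> (exists2 i, i < n & c i = n) ->
    num_proj_dim n c n = 1.
  move=> /cartan_inv[C_unit _] [i i_lt ci]; apply/num_proj_dim1P.
  exists i; split=> // j j_lt cj.
  by have /(congr1 val) := dim_n_proj_uniq C_unit (a := Ordinal j_lt) (b := Ordinal i_lt) cj ci.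
have gl_of_uniq : num_proj_dim n c n = 1 -> finite_gldim n c.
  case/num_proj_dim1P => i0 [i0_lt ci0 uniq].
  case: Hk => [/linear_finite_gldim //|Hc]; exact: cyclic_finite_gldim Hc i0_lt ci0 uniq.
have dim_le : finite_gldim n c -> exists2 b, b < n & c b <= n.
  by case/cartan_inv => C_unit [s rowsum]; apply: (exists_dim_le C_unit rowsum).
split; split.
- case=> gl mag1; have [C_unit [s rowsum]] := cartan_inv gl.
  exact: uniq_of_gl gl (kupisch_dim_n Hk (exists_dim_ge C_unit rowsum mag1) (dim_le gl)).
- move=> uniq; have gl := gl_of_uniq uniq; split=> //.
  case/num_proj_dim1P: uniq => i0 [i0_lt ci0 _]; have [C_unit _] := cartan_inv gl.
  exact: magnitude_dim_n C_unit (Ordinal i0_lt) ci0.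
- move=> uniq; split; first exact: gl_of_uniq.
  case/num_proj_dim1P: uniq => i0 [i0_lt ci0 _].
  by apply/loewy_length_geP => //; exists i0; rewrite ?ci0.
- case=> gl /loewy_length_geP-/(_ n_gt0) dim_ge.
  exact: uniq_of_gl gl (kupisch_dim_n Hk dim_ge (dim_le gl)).
Qed.
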